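(* For an integer $j\ge 2$ let $\bar\alpha_j$ be the largest $\alpha\ge 0$ such that $\left(1-e^{-\alpha j x}\right)^{j-1}\le x$ for all $x\in(0,1]$. Then $\bar\alpha_2=\tfrac12$, and for $j\ge 3$, $$\bar\alpha_j=\frac{1}{j}\,y_j^*\left(1-e^{-y_j^*}\right)^{1-j},$$ where $y_j^*$ is the unique positive solution of $e^{y}=(j-1)y+1$ (equivalently $y_j^*=-\frac{1}{j-1}\bigl(1+(j-1)W_{-1}\bigl(-\tfrac{1}{j-1}e^{-1/(j-1)}\bigr)\bigr)$ with $W_{-1}$ the non-principal real branch of the Lambert $W$ function). Numerically, $\bar\alpha_3\approx 0.8184$ and $\bar\alpha_4\approx 0.7722$. *)

From Stdlib Require Import Reals.
Open Scope R_scope.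

Definition admissible (j : nat) (alpha : R) : Prop :=
  0 <= alpha /\
  forall x : R, 0 < x <= 1 -> (1 - exp (- (alpha * INR j * x))) ^ (j - 1) <= x.

Definition is_largest_admissible (j : nat) (a : R) : Prop :=
  admissible j a /\ forall alpha : R, admissible j alpha -> alpha <= a.

(* Writing m = j - 1 and c = alpha j, admissibility says that the rescaled
   constant c "fits" exponent m: (1 - e^(-c x))^m <= x on (0,1].  Substituting
   y = c x, this is the statement c <= psi_m(y) := y / (1 - e^(-y))^m for
   y in (0,c].  Since psi_m(y) >= y, every fitting c is bounded by psi_m(y) for
   EVERY y > 0, and conversely the minimum value of psi_m fits.  So the best
   constant is min psi_m, and alpha_j = min psi_m / j.

   For m >= 2 the minimum is attained at the positive root y* of
   e^y = m y + 1: the derivative of ln psi_m is e^(-y) h(y) / (y (1 - e^(-y)))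
   with h(y) = e^y - 1 - m y, and the convex function h vanishes at 0 and y*,
   is negative in between and positive beyond.  For m = 1 (j = 2) psi_1 has
   infimum 1 at y -> 0: c = 1 fits by 1 - e^(-x) <= x, and no c > 1 fits since
   1 - e^(-c x) has slope c > 1 at 0. *)

From Stdlib Require Import Reals Lra Lia.
From Coquelicot Require Import Coquelicot.
Open Scope R_scope.

(* A function with strictly increasing derivative has strictly increasing
   chord slopes; this is the convexity used to locate the sign of h. *)
Lemma chord_slope_lt (f f' : R -> R) (a b c : R) :
  (forall x, is_derive f x (f' x)) ->
  (forall x y, x < y -> f' x < f' y) ->
  a < b < c -> (f b - f a) * (c - b) < (f c - f b) * (b - a).
Proof.
  intros Hder Hmono Habc.
  assert (Hlim : forall x, derivable_pt_lim f x (f' x))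
    by (intro x; apply is_derive_Reals, Hder).
  destruct (MVT_cor2 f f' a b) as [u [Eu Hu]]; [lra | intros; apply Hlim |].
  destruct (MVT_cor2 f f' b c) as [v [Ev Hv]]; [lra | intros; apply Hlim |].
  rewrite Eu, Ev.
  assert (Huv : f' u < f' v) by (apply Hmono; lra).
  assert (0 < (b - a) * (c - b)) by (apply Rmult_lt_0_compat; lra).
  nra.
Qed.

Definition exp_gap (n y : R) : R := exp y - 1 - n * y.

Lemma exp_gap_derive (n y : R) : is_derive (exp_gap n) y (exp y - n).
Proof. unfold exp_gap; auto_derive; [exact I | ring]. Qed.

Lemma exp_gap_0 (n : R) : exp_gap n 0 = 0.
Proof. unfold exp_gap; rewrite exp_0; ring. Qed.

Lemma exp_gap_chord (n a b c : R) : a < b < c ->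
  (exp_gap n b - exp_gap n a) * (c - b) < (exp_gap n c - exp_gap n b) * (b - a).
Proof.
  apply chord_slope_lt with (f' := fun y => exp y - n);
    [apply exp_gap_derive | intros x y Hxy; pose proof (exp_increasing x y Hxy); lra].
Qed.

Lemma exp_gap_neg_before_root (n y0 y : R) :
  exp_gap n y0 = 0 -> 0 < y < y0 -> exp_gap n y < 0.
Proof.
  intros Hroot Hy.
  pose proof (exp_gap_chord n 0 y y0 Hy) as H.
  rewrite exp_gap_0, Hroot in H. nra.
Qed.

Lemma exp_gap_pos_after_root (n y0 y : R) :
  0 < y0 -> exp_gap n y0 = 0 -> y0 < y -> 0 < exp_gap n y.
Proof.
  intros Hy0 Hroot Hy.
  pose proof (exp_gap_chord n 0 y0 y (conj Hy0 Hy)) as H.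
  rewrite exp_gap_0, Hroot in H. nra.
Qed.

Lemma exp_gap_root_unique (n y1 y2 : R) :
  0 < y1 -> exp_gap n y1 = 0 -> 0 < y2 -> exp_gap n y2 = 0 -> y1 = y2.
Proof.
  intros Hy1 E1 Hy2 E2.
  destruct (Rtotal_order y1 y2) as [Hlt | [Heq | Hgt]]; [| exact Heq |].
  - pose proof (exp_gap_neg_before_root n y2 y1 E2 (conj Hy1 Hlt)); lra.
  - pose proof (exp_gap_neg_before_root n y1 y2 E1 (conj Hy2 Hgt)); lra.
Qed.

(* For n >= 2, h_n changes sign on [1/4, 4n], since e^(1/4) < 4/3 and
   e^(4n) > (1 + 2n)^2. *)
Lemma exp_gap_root_exists (n : R) : 2 <= n -> exists y, 0 < y /\ exp_gap n y = 0.
Proof.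
  intros Hn.
  assert (Hsmall : exp_gap n (1/4) < 0).
  { unfold exp_gap.
    assert (1 + - (1/4) < exp (- (1/4))) by (apply exp_ineq1; lra).
    assert (exp (1/4) * exp (- (1/4)) = 1)
      by (rewrite <- exp_plus, Rplus_opp_r; apply exp_0).
    pose proof (exp_pos (1/4)). nra. }
  assert (Hlarge : 0 < exp_gap n (4 * n)).
  { unfold exp_gap.
    assert (1 + 2 * n < exp (2 * n)) by (apply exp_ineq1; lra).
    replace (4 * n) with (2 * n + 2 * n) by ring. rewrite exp_plus. nra. }
  assert (Hcont : continuity (exp_gap n)).
  { apply derivable_continuous; intro y.
    exists (exp y - n). apply is_derive_Reals, exp_gap_derive. }
  destruct (IVT (exp_gap n) (1/4) (4 * n) Hcont ltac:(lra) Hsmall Hlarge)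
    as [y [Hy E]].
  exists y; split; [lra | exact E].
Qed.

Lemma one_minus_exp_neg_pos (y : R) : 0 < y -> 0 < 1 - exp (- y).
Proof.
  intros Hy. pose proof (exp_increasing (- y) 0 ltac:(lra)). rewrite exp_0 in *. lra.
Qed.

Lemma min_of_derivative_sign (f f' : R -> R) (y0 : R) :
  0 < y0 ->
  (forall x, 0 < x -> is_derive f x (f' x)) ->
  (forall x, 0 < x < y0 -> f' x < 0) ->
  (forall x, y0 < x -> 0 < f' x) ->
  forall y, 0 < y -> f y0 <= f y.
Proof.
  intros Hy0 Hder Hneg Hpos y Hy.
  assert (Hlim : forall x, 0 < x -> derivable_pt_lim f x (f' x))
    by (intros x Hx; apply is_derive_Reals, Hder, Hx).
  destruct (Rtotal_order y y0) as [Hlt | [-> | Hgt]]; [| lra |].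
  - destruct (MVT_cor2 f f' y y0) as [c [E Hc]]; [lra | intros; apply Hlim; lra |].
    pose proof (Hneg c ltac:(lra)). nra.
  - destruct (MVT_cor2 f f' y0 y) as [c [E Hc]]; [lra | intros; apply Hlim; lra |].
    pose proof (Hpos c ltac:(lra)). nra.
Qed.

Definition psi (m : nat) (y : R) : R := y / (1 - exp (- y)) ^ m.

Definition log_psi (m : nat) (y : R) : R := ln y - INR m * ln (1 - exp (- y)).

Lemma ln_psi (m : nat) (y : R) : 0 < y -> ln (psi m y) = log_psi m y.
Proof.
  intros Hy. pose proof (one_minus_exp_neg_pos y Hy).
  unfold psi, log_psi, Rdiv.
  rewrite ln_mult, ln_Rinv, ln_pow; [ring | lra | apply pow_lt; lra | lra
    | apply Rinv_0_lt_compat, pow_lt; lra].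
Qed.

Lemma log_psi_derive (m : nat) (y : R) : 0 < y ->
  is_derive (log_psi m) y (exp (- y) * exp_gap (INR m) y / (y * (1 - exp (- y)))).
Proof.
  intros Hy. pose proof (one_minus_exp_neg_pos y Hy) as Hpos.
  unfold log_psi; auto_derive; [repeat split; lra |].
  assert (1 < exp y) by (rewrite <- exp_0; apply exp_increasing; exact Hy).
  unfold exp_gap. rewrite exp_Ropp. field. repeat split; lra.
Qed.

Lemma psi_min_at_root (m : nat) (y0 : R) :
  0 < y0 -> exp y0 = INR m * y0 + 1 -> forall y, 0 < y -> psi m y0 <= psi m y.
Proof.
  intros Hy0 Hroot.
  assert (Hgap : exp_gap (INR m) y0 = 0) by (unfold exp_gap; rewrite Hroot; ring).
  assert (Hfactor : forall x, 0 < x -> 0 < exp (- x) / (x * (1 - exp (- x)))).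
  { intros x Hx. pose proof (one_minus_exp_neg_pos x Hx). pose proof (exp_pos (- x)).
    apply Rdiv_lt_0_compat, Rmult_lt_0_compat; lra. }
  assert (Hmin : forall y, 0 < y -> log_psi m y0 <= log_psi m y).
  { apply min_of_derivative_sign
      with (f' := fun x => exp (- x) * exp_gap (INR m) x / (x * (1 - exp (- x)))).
    - exact Hy0.
    - apply log_psi_derive.
    - intros x Hx. pose proof (Hfactor x ltac:(lra)).
      pose proof (exp_gap_neg_before_root _ _ _ Hgap Hx).
      unfold Rdiv in *. nra.
    - intros x Hx. pose proof (Hfactor x ltac:(lra)).
      pose proof (exp_gap_pos_after_root _ _ _ Hy0 Hgap Hx).
      unfold Rdiv in *. nra. }
  intros y Hy.
  assert (Hpsi : forall x, 0 < x -> 0 < psi m x).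
  { intros x Hx. pose proof (one_minus_exp_neg_pos x Hx).
    apply Rdiv_lt_0_compat, pow_lt; lra. }
  apply Rnot_lt_le; intro Hlt.
  pose proof (ln_increasing _ _ (Hpsi y Hy) Hlt) as Hln.
  rewrite !ln_psi in Hln by lra.
  pose proof (Hmin y Hy). lra.
Qed.

Lemma psi_ge_id (m : nat) (y : R) : 0 < y -> y <= psi m y.
Proof.
  intros Hy. pose proof (one_minus_exp_neg_pos y Hy). pose proof (exp_pos (- y)).
  assert (Hp : 0 < (1 - exp (- y)) ^ m) by (apply pow_lt; lra).
  assert (Hp1 : (1 - exp (- y)) ^ m <= 1)
    by (rewrite <- (pow1 m) at 2; apply pow_incr; lra).
  unfold psi. apply Rmult_le_reg_r with ((1 - exp (- y)) ^ m); [exact Hp |].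
  unfold Rdiv. rewrite Rmult_assoc, Rinv_l by lra. nra.
Qed.

Definition fits (m : nat) (c : R) : Prop :=
  forall x, 0 < x <= 1 -> (1 - exp (- (c * x))) ^ m <= x.

Lemma fits_le_psi (m : nat) (c y : R) : 0 < y -> fits m c -> c <= psi m y.
Proof.
  intros Hy Hfit.
  pose proof (psi_ge_id m y Hy).
  destruct (Rlt_or_le c y) as [Hcy | Hyc]; [lra |].
  pose proof (one_minus_exp_neg_pos y Hy).
  assert (Hp : 0 < (1 - exp (- y)) ^ m) by (apply pow_lt; lra).
  assert (Hx : 0 < y / c <= 1).
  { split; [apply Rdiv_lt_0_compat; lra |].
    apply Rmult_le_reg_r with c; [lra |]. unfold Rdiv. rewrite Rmult_assoc, Rinv_l; lra. }
  specialize (Hfit (y / c) Hx).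
  replace (c * (y / c)) with y in Hfit by (field; lra).
  unfold psi. apply Rmult_le_reg_r with ((1 - exp (- y)) ^ m); [exact Hp |].
  unfold Rdiv. rewrite Rmult_assoc, Rinv_l by lra.
  apply Rmult_le_compat_l with (r := c) in Hfit; [| lra].
  replace (c * (y / c)) with y in Hfit by (field; lra). lra.
Qed.

Lemma fits_psi_min (m : nat) (y0 : R) :
  0 < y0 -> (forall y, 0 < y -> psi m y0 <= psi m y) -> fits m (psi m y0).
Proof.
  intros Hy0 Hmin x Hx.
  set (c := psi m y0).
  assert (Hc : 0 < c) by (pose proof (psi_ge_id m y0 Hy0); unfold c; lra).
  assert (Hcx : 0 < c * x) by (apply Rmult_lt_0_compat; lra).
  pose proof (one_minus_exp_neg_pos (c * x) Hcx).
  assert (Hp : 0 < (1 - exp (- (c * x))) ^ m) by (apply pow_lt; lra).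
  pose proof (Hmin (c * x) Hcx) as Hle. fold c in Hle. unfold psi in Hle.
  apply Rmult_le_compat_r with (r := (1 - exp (- (c * x))) ^ m) in Hle; [| lra].
  unfold Rdiv in Hle. rewrite Rmult_assoc, Rinv_l, Rmult_1_r in Hle by lra.
  nra.
Qed.

Lemma above_diagonal_near_0 (f : R -> R) (c : R) :
  derivable_pt_lim f 0 c -> f 0 = 0 -> 1 < c -> exists x, 0 < x <= 1 /\ x < f x.
Proof.
  intros Hder Hf0 Hc.
  destruct (Hder (c - 1) ltac:(lra)) as [d Hd].
  pose proof (cond_pos d) as Hdpos.
  set (x := Rmin 1 (d / 2)).
  assert (Hx : 0 < x <= 1)
    by (split; [apply Rmin_glb_lt; lra | apply Rmin_l]).
  assert (Hxd : x <= d / 2) by apply Rmin_r.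
  exists x; split; [exact Hx |].
  assert (Hquot : Rabs ((f (0 + x) - f 0) / x - c) < c - 1).
  { apply Hd; [lra | rewrite Rabs_right; lra]. }
  rewrite Rplus_0_l, Hf0, Rminus_0_r in Hquot.
  destruct (Rabs_def2 _ _ Hquot) as [_ Hlow].
  assert (1 < f x / x) by lra.
  apply Rmult_lt_compat_r with (r := x) in H; [| lra].
  unfold Rdiv in H. rewrite Rmult_assoc, Rinv_l in H; lra.
Qed.

Lemma fits_1_1 : fits 1 1.
Proof.
  intros x Hx. rewrite pow_1, Rmult_1_l. pose proof (exp_ineq1_le (- x)). lra.
Qed.

Lemma fits_1_le_1 (c : R) : fits 1 c -> c <= 1.
Proof.
  intros Hfit. apply Rnot_lt_le; intro Hc.
  assert (Hder : derivable_pt_lim (fun x => 1 - exp (- (c * x))) 0 c).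
  { apply is_derive_Reals. auto_derive; [exact I |].
    rewrite Rmult_0_r, Ropp_0, exp_0. ring. }
  assert (Hf0 : 1 - exp (- (c * 0)) = 0) by (rewrite Rmult_0_r, Ropp_0, exp_0; ring).
  destruct (above_diagonal_near_0 _ c Hder Hf0 Hc)
    as [x [Hx Hlt]].
  specialize (Hfit x Hx). rewrite pow_1 in Hfit. lra.
Qed.

(* Admissibility of alpha for j is exactly "alpha >= 0 and alpha j fits j-1",
   so the best fitting constant, divided by j, is the largest admissible alpha. *)
Lemma largest_admissible_of_fits (j : nat) (c : R) :
  (0 < j)%nat -> 0 <= c -> fits (j - 1) c ->
  (forall c', fits (j - 1) c' -> c' <= c) ->
  is_largest_admissible j (c / INR j).
Proof.
  intros Hj Hc Hfit Hbest.
  assert (Hjpos : 0 < INR j) by (apply lt_0_INR; exact Hj).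
  split.
  - split; [apply Rdiv_le_0_compat; lra |].
    intros x Hx. replace (c / INR j * INR j) with c by (field; lra). exact (Hfit x Hx).
  - intros alpha [_ Hadm].
    apply Rmult_le_reg_r with (INR j); [exact Hjpos |].
    replace (c / INR j * INR j) with c by (field; lra). exact (Hbest _ Hadm).
Qed.

Theorem proposition1 :
  is_largest_admissible 2 (1 / 2) /\
  forall j : nat, (3 <= j)%nat ->
    (exists! y : R, 0 < y /\ exp y = INR (j - 1) * y + 1) /\
    forall y : R, 0 < y -> exp y = INR (j - 1) * y + 1 ->
      is_largest_admissible j (/ INR j * y * / (1 - exp (- y)) ^ (j - 1)).
Proof.
  split.
  - replace (1 / 2) with (1 / INR 2) by (simpl; field).
    apply largest_admissible_of_fits; [auto | lra | exact fits_1_1 | exact fits_1_le_1].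
  - intros j Hj.
    assert (Hm : 2 <= INR (j - 1)) by (replace 2 with (INR 2) by (simpl; ring); apply le_INR; lia).
    split.
    + destruct (exp_gap_root_exists _ Hm) as [y [Hy E]].
      exists y; split; [unfold exp_gap in E; split; lra |].
      intros y' [Hy' E']. apply (exp_gap_root_unique (INR (j - 1))); auto; unfold exp_gap; lra.
    + intros y Hy Hroot.
      replace (/ INR j * y * / (1 - exp (- y)) ^ (j - 1)) with (psi (j - 1) y / INR j)
        by (unfold psi, Rdiv; ring).
      pose proof (psi_min_at_root _ _ Hy Hroot) as Hmin.
      apply largest_admissible_of_fits; [lia | pose proof (psi_ge_id (j - 1) y Hy); lra
        | apply fits_psi_min; assumption | intros c' Hfit; apply fits_le_psi; assumption].
Qed.
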